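(* In the general framework (continuous $f_{l,n}:\Omega\to\mathbb R^d$, $l=1,\ldots,R_n$, $Y_n(\omega)=\{f_{l,n}(\omega)\}_l$), let $\omega\in\Omega$ and suppose that for some $s>0$, $\liminf_{n\to\infty}T(Y_n(\omega),sR_n^{-1/d})/R_n=0$. Then there exists $h:\mathbb N\to[0,\infty)$ with $\sum_nh(n)=\infty$ such that $\{x\in\mathbb R^d:x\in\bigcup_{l=1}^{R_n}B(f_{l,n}(\omega),(h(n)/R_n)^{1/d})$ for infinitely many $n\}$ has zero Lebesgue measure.
   Context: $T(Y,r)$ = maximal cardinality of an $r$-separated subset (distinct points at distance $>r$) of a finite set $Y$; $B(x,r)$ closed ball. *)

From Stdlib Require Import Reals Lra List.
Import ListNotations.
Open Scope R_scope.

(* Points of R^d are represented as functions nat -> R; only the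
   coordinates 0..d-1 are ever inspected. *)
Definition pt := nat -> R.

Fixpoint sumsq (d : nat) (x y : pt) : R :=
  match d with
  | O => 0
  | S k => sumsq k x y + (x k - y k) * (x k - y k)
  end.

Definition dist (d : nat) (x y : pt) : R := sqrt (sumsq d x y).

Definition ball (d : nat) (c : pt) (r : R) (x : pt) : Prop := dist d x c <= r.

Fixpoint sublists {A : Type} (l : list A) : list (list A) :=
  match l with
  | [] => [[]]
  | x :: xs => let s := sublists xs in map (cons x) s ++ s
  end.

Fixpoint separatedb (d : nat) (r : R) (l : list pt) : bool :=
  match l with
  | [] => true
  | x :: xs =>
      forallb (fun y => if Rlt_dec r (dist d x y) then true else false) xs
      && separatedb d r xs
  end.

(* T(Y, r): maximal cardinality of an r-separated subset of the finite set Y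
   (Y given as a list; for r >= 0 duplicates in Y are irrelevant). *)
Definition Tsep (d : nat) (Y : list pt) (r : R) : nat :=
  fold_right Nat.max 0%nat
    (map (@length pt) (filter (separatedb d r) (sublists Y))).

Definition Yn {Omega : Type} (f : nat -> nat -> Omega -> pt) (Rn : nat -> nat)
  (n : nat) (w : Omega) : list pt :=
  map (fun l => f l n w) (seq 1 (Rn n)).

(* liminf_{n -> oo} u n = 0 for a nonnegative real sequence *)
Definition liminf_zero (u : nat -> R) : Prop :=
  forall eps, 0 < eps -> forall N, exists n, (N <= n)%nat /\ u n < eps.

Definition series_diverges (h : nat -> R) : Prop :=
  forall M, exists N, M < sum_f_R0 h N.

Definition droot (d : nat) (x : R) : R :=
  if Rle_dec x 0 then 0 else Rpower x (1 / INR d).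

Fixpoint prod_upto (d : nat) (g : nat -> R) : R :=
  match d with
  | O => 1
  | S k => prod_upto k g * g k
  end.

Definition lebesgue_null (d : nat) (E : pt -> Prop) : Prop :=
  forall eps, 0 < eps ->
  exists a b : nat -> pt,
    (forall k i, (i < d)%nat -> a k i <= b k i) /\
    (forall N, sum_f_R0 (fun k => prod_upto d (fun i => b k i - a k i)) N <= eps) /\
    (forall x, E x -> exists k, forall i, (i < d)%nat -> a k i <= x i <= b k i).

From Pilot Require Import Defs.
From Stdlib Require Import Reals Lra Lia List Classical ClassicalEpsilon.
Import ListNotations.
Open Scope R_scope.

(* Choose n_0 < n_1 < ... with T(Y_(n_k), rho_(n_k)) / R_(n_k) < 2^-k, where
   rho_n = s R_n^(-1/d), and put h = s^d on {n_k} and h = 0 elsewhere, so that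
   sum h = oo and the radius (h(n)/R_n)^(1/d) is rho_(n_k) along the
   subsequence and 0 off it.  A maximal rho-separated subset of Y is a rho-net
   of Y, so the rho-balls centred in Y_(n_k) lie in T(Y_(n_k), rho_(n_k))
   cubes of side 4 rho_(n_k), of total volume (4s)^d T/R_(n_k) < (4s)^d 2^-k;
   off the subsequence the balls are points.  Hence for every K the limsup
   set is covered by cubes of total volume at most 2 (4s)^d 2^-K. *)

Lemma sumsq_nonneg d x y : 0 <= sumsq d x y.
Proof.
  induction d as [|d IH]; simpl; [lra|].
  pose proof (Rle_0_sqr (x d - y d)); unfold Rsqr in *; lra.
Qed.

Lemma sqr_coord_le_sumsq d x y i :
  (i < d)%nat -> (x i - y i) * (x i - y i) <= sumsq d x y.
Proof.
  induction d as [|d IH]; intros Hi; simpl; [lia|].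
  destruct (Nat.eq_dec i d) as [->|Hne].
  - pose proof (sumsq_nonneg d x y); lra.
  - assert (Hlt : (i < d)%nat) by lia.
    pose proof (IH Hlt); pose proof (Rle_0_sqr (x d - y d)); unfold Rsqr in *; lra.
Qed.

Lemma coord_le_dist d x y r i :
  (i < d)%nat -> Defs.dist d x y <= r -> - r <= x i - y i <= r.
Proof.
  intros Hi Hxy.
  assert (Habs : Rabs (x i - y i) <= r).
  { rewrite <- sqrt_Rsqr_abs. apply Rle_trans with (2 := Hxy).
    apply sqrt_le_1_alt, sqr_coord_le_sumsq, Hi. }
  revert Habs; unfold Rabs; destruct Rcase_abs; lra.
Qed.

Lemma dist_self d x : Defs.dist d x x = 0.
Proof.
  unfold Defs.dist. replace (sumsq d x x) with 0; [apply sqrt_0|].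
  induction d as [|d IH]; simpl; [reflexivity|]. rewrite <- IH; ring.
Qed.

Lemma prod_upto_const d g c : (forall i, g i = c) -> prod_upto d g = c ^ d.
Proof. intros Hg; induction d as [|d IH]; simpl; [reflexivity|]. rewrite IH, Hg; ring. Qed.

Lemma prod_upto_nonneg d g :
  (forall i, (i < d)%nat -> 0 <= g i) -> 0 <= prod_upto d g.
Proof.
  induction d as [|d IH]; simpl; intros Hg; [lra|].
  apply Rmult_le_pos; [apply IH; intros i Hi|]; apply Hg; lia.
Qed.

Definition box := (pt * pt)%type.
Definition vol d (b : box) : R := prod_upto d (fun i => snd b i - fst b i).
Definition in_box d (b : box) (x : pt) : Prop :=
  forall i, (i < d)%nat -> fst b i <= x i <= snd b i.
Definition box_wf d (b : box) : Prop := forall i, (i < d)%nat -> fst b i <= snd b i.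
Definition cube (c : pt) (a : R) : box := (fun i => c i - a, fun i => c i + a).
Definition box0 : box := cube (fun _ => 0) 0.

Fixpoint vol_list d (l : list box) : R :=
  match l with [] => 0 | b :: l' => vol d b + vol_list d l' end.

Lemma vol_nonneg d b : box_wf d b -> 0 <= vol d b.
Proof. intros Hb. apply prod_upto_nonneg. intros i Hi. specialize (Hb i Hi). lra. Qed.

Lemma vol_cube d c a : vol d (cube c a) = (2 * a) ^ d.
Proof. apply prod_upto_const. intros i; simpl; ring. Qed.

Lemma cube_wf d c a : 0 <= a -> box_wf d (cube c a).
Proof. intros Ha i _; simpl; lra. Qed.

Lemma vol_box0 d : (0 < d)%nat -> vol d box0 = 0.
Proof. intros Hd. unfold box0. rewrite vol_cube, Rmult_0_r. apply pow_i, Hd. Qed.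

Lemma vol_list_app d l1 l2 : vol_list d (l1 ++ l2) = vol_list d l1 + vol_list d l2.
Proof. induction l1 as [|b l1 IH]; simpl; [ring|]. rewrite IH; ring. Qed.

Lemma vol_list_nonneg d l : (forall b, In b l -> box_wf d b) -> 0 <= vol_list d l.
Proof.
  induction l as [|b l IH]; simpl; intros Hwf; [lra|].
  pose proof (vol_nonneg d b (Hwf b (or_introl eq_refl))).
  assert (0 <= vol_list d l) by (apply IH; auto). lra.
Qed.

Lemma sum_vol_nth_le d L N : (0 < d)%nat -> (forall b, In b L -> box_wf d b) ->
  sum_f_R0 (fun p => vol d (nth p L box0)) N <= vol_list d L.
Proof.
  intros Hd. revert N. induction L as [|b L IH]; intros N Hwf.
  - rewrite (sum_eq _ (fun _ => 0)), sum_cte; simpl; [lra|].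
    intros [|i] _; apply vol_box0, Hd.
  - assert (HwfL : forall b', In b' L -> box_wf d b') by (intros; apply Hwf; right; auto).
    pose proof (vol_nonneg d b (Hwf b (or_introl eq_refl))).
    destruct N as [|N]; simpl vol_list.
    + pose proof (vol_list_nonneg d L HwfL); simpl; lra.
    + rewrite decomp_sum by lia. simpl. specialize (IH N HwfL). lra.
Qed.

Section Flatten.

Variable B : nat -> list box.

(* Each block is preceded by a dummy [box0], so that [flat_boxes m] has more
   than [m] entries and its [p]-th entry no longer changes once [p <= m]. *)
Fixpoint flat_boxes (m : nat) : list box :=
  match m with
  | O => box0 :: B O
  | S m' => flat_boxes m' ++ box0 :: B (S m')
  end.

Definition box_seq (p : nat) : box := nth p (flat_boxes p) box0.

Lemma length_flat_boxes m : (m < length (flat_boxes m))%nat.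
Proof. induction m as [|m IH]; simpl; [lia|]. rewrite length_app; simpl; lia. Qed.

Lemma flat_boxes_prefix m m' : (m <= m')%nat -> exists t, flat_boxes m' = flat_boxes m ++ t.
Proof.
  induction 1 as [|m' _ [t Ht]]; [exists []; rewrite app_nil_r; reflexivity|].
  exists (t ++ box0 :: B (S m')). simpl. rewrite Ht, app_assoc. reflexivity.
Qed.

Lemma box_seq_nth p m : (p < length (flat_boxes m))%nat -> box_seq p = nth p (flat_boxes m) box0.
Proof.
  intros Hp. unfold box_seq. destruct (Nat.le_ge_cases p m) as [Hpm|Hmp].
  - destruct (flat_boxes_prefix p m Hpm) as [t ->].
    symmetry; apply app_nth1, length_flat_boxes.
  - destruct (flat_boxes_prefix m p Hmp) as [t ->]. apply app_nth1, Hp.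
Qed.

Lemma flat_boxes_wf d m :
  (forall j b, In b (B j) -> box_wf d b) -> forall b, In b (flat_boxes m) -> box_wf d b.
Proof.
  intros Hwf. assert (H0 : box_wf d box0) by (apply cube_wf; lra).
  induction m as [|m IH]; simpl; intros b Hb.
  - destruct Hb as [<-|Hb]; eauto.
  - apply in_app_or in Hb. destruct Hb as [Hb|[<-|Hb]]; eauto.
Qed.

Lemma box_seq_surj j b : In b (B j) -> exists p, box_seq p = b.
Proof.
  intros Hb. assert (Hin : In b (flat_boxes j)).
  { destruct j; simpl; [right; exact Hb|]. apply in_or_app; right; right; exact Hb. }
  destruct (In_nth _ _ box0 Hin) as [p [Hp Hnth]].
  exists p. rewrite (box_seq_nth p j Hp); exact Hnth.
Qed.

Lemma vol_list_flat_boxes d m : (0 < d)%nat ->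
  vol_list d (flat_boxes m) = sum_f_R0 (fun k => vol_list d (B k)) m.
Proof.
  intros Hd. induction m as [|m IH]; simpl; rewrite ?vol_box0 by exact Hd; [ring|].
  rewrite vol_list_app, IH. simpl. rewrite vol_box0 by exact Hd. ring.
Qed.

End Flatten.

Lemma lebesgue_null_of_box_lists d (E : pt -> Prop) : (0 < d)%nat ->
  (forall eps, 0 < eps -> exists B : nat -> list box,
     (forall j b, In b (B j) -> box_wf d b) /\
     (forall N, sum_f_R0 (fun k => vol_list d (B k)) N <= eps) /\
     (forall x, E x -> exists j b, In b (B j) /\ in_box d b x)) ->
  lebesgue_null d E.
Proof.
  intros Hd HB eps Heps. destruct (HB eps Heps) as [B [Hwf [Hvol Hcov]]].
  exists (fun k => fst (box_seq B k)), (fun k => snd (box_seq B k)). split; [|split].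
  - intros k i Hi. apply (flat_boxes_wf B d k Hwf); [|exact Hi].
    apply nth_In, length_flat_boxes.
  - intros N. rewrite (sum_eq _ (fun p => vol d (nth p (flat_boxes B N) box0))).
    + apply Rle_trans with (vol_list d (flat_boxes B N)).
      * apply sum_vol_nth_le; [exact Hd|]. apply flat_boxes_wf, Hwf.
      * rewrite vol_list_flat_boxes by exact Hd. apply Hvol.
    + intros p Hp. unfold vol. rewrite (box_seq_nth B p N); [reflexivity|].
      pose proof (length_flat_boxes B N). lia.
  - intros x Hx. destruct (Hcov x Hx) as [j [b [Hb Hxb]]].
    destruct (box_seq_surj B j b Hb) as [p Hp]. exists p. rewrite Hp. exact Hxb.
Qed.

Lemma lebesgue_null_subset d (E F : pt -> Prop) :
  (forall x, E x -> F x) -> lebesgue_null d F -> lebesgue_null d E.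
Proof.
  intros HEF HF eps Heps. destruct (HF eps Heps) as [a [b [Hab [Hvol Hcov]]]].
  exists a, b. split; [exact Hab|split; [exact Hvol|]]. intros x Hx. apply Hcov, HEF, Hx.
Qed.

Definition far d r (x y : pt) : bool := if Rlt_dec r (Defs.dist d x y) then true else false.

Fixpoint greedy_net d r (Y : list pt) : list pt :=
  match Y with
  | [] => []
  | x :: Y' =>
      let S := greedy_net d r Y' in if forallb (far d r x) S then x :: S else S
  end.

Lemma greedy_net_sublist d r Y : In (greedy_net d r Y) (sublists Y).
Proof.
  induction Y as [|x Y IH]; simpl; [left; reflexivity|].
  destruct forallb; apply in_or_app; [left; apply in_map|right]; exact IH.
Qed.

Lemma greedy_net_separated d r Y : separatedb d r (greedy_net d r Y) = true.
Proof.
  induction Y as [|x Y IH]; simpl; [reflexivity|].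
  destruct (forallb (far d r x) (greedy_net d r Y)) eqn:Hfar; [|exact IH].
  simpl. unfold far in Hfar. rewrite Hfar, IH. reflexivity.
Qed.

Lemma length_greedy_net_le_Tsep d r Y : (length (greedy_net d r Y) <= Tsep d Y r)%nat.
Proof.
  assert (Hin : In (greedy_net d r Y) (filter (separatedb d r) (sublists Y))).
  { apply filter_In. split; [apply greedy_net_sublist|apply greedy_net_separated]. }
  unfold Tsep. generalize dependent (filter (separatedb d r) (sublists Y)).
  intros l; induction l as [|S l IH]; simpl; [tauto|].
  intros [->|HS]; [lia|]. specialize (IH HS); lia.
Qed.

Lemma greedy_net_covers d r Y x : 0 <= r -> In x Y ->
  exists y, In y (greedy_net d r Y) /\ Defs.dist d x y <= r.
Proof.
  intros Hr. induction Y as [|z Y IH]; simpl; [tauto|]. intros [->|Hx].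
  - destruct (forallb (far d r x) (greedy_net d r Y)) eqn:Hfar.
    + exists x. split; [left; reflexivity|]. rewrite dist_self; exact Hr.
    + apply Bool.not_true_iff_false in Hfar. rewrite forallb_forall in Hfar.
      apply not_all_ex_not in Hfar. destruct Hfar as [y Hy].
      apply imply_to_and in Hy. destruct Hy as [Hy Hnear].
      exists y. split; [exact Hy|]. unfold far in Hnear.
      destruct Rlt_dec; [contradiction|lra].
  - destruct (IH Hx) as [y [Hy Hxy]]. exists y. split; [|exact Hxy].
    destruct forallb; [right|]; exact Hy.
Qed.

Definition net_cubes d r (Y : list pt) : list box :=
  map (fun y => cube y (2 * r)) (greedy_net d r Y).

Lemma net_cubes_wf d r Y : 0 <= r -> forall b, In b (net_cubes d r Y) -> box_wf d b.
Proof.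
  intros Hr b Hb. apply in_map_iff in Hb. destruct Hb as [y [<- _]]. apply cube_wf. lra.
Qed.

Lemma vol_list_net_cubes d r Y : 0 <= r ->
  vol_list d (net_cubes d r Y) <= INR (Tsep d Y r) * (4 * r) ^ d.
Proof.
  intros Hr. apply Rle_trans with (INR (length (greedy_net d r Y)) * (4 * r) ^ d).
  - unfold net_cubes. induction (greedy_net d r Y) as [|y l IH];
      cbn [map vol_list length]; [simpl; lra|].
    rewrite vol_cube, S_INR. replace (2 * (2 * r)) with (4 * r) by ring. lra.
  - apply Rmult_le_compat_r; [apply pow_le; lra|].
    apply le_INR, length_greedy_net_le_Tsep.
Qed.

Lemma net_cubes_cover d r Y y x : 0 <= r -> In y Y -> Defs.dist d x y <= r ->
  exists b, In b (net_cubes d r Y) /\ in_box d b x.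
Proof.
  intros Hr Hy Hxy. destruct (greedy_net_covers d r Y y Hr Hy) as [c [Hc Hyc]].
  exists (cube c (2 * r)). split; [apply (in_map (fun z => cube z (2 * r))), Hc|].
  intros i Hi. simpl.
  pose proof (coord_le_dist d x y r i Hi Hxy). pose proof (coord_le_dist d y c r i Hi Hyc). lra.
Qed.

Lemma increasing_choice (P : nat -> nat -> Prop) :
  (forall k N, exists n, (N <= n)%nat /\ P k n) ->
  exists g : nat -> nat, (forall k, P k (g k)) /\ (forall k, (g k < g (S k))%nat).
Proof.
  intros HP. pose (pick k N := constructive_indefinite_description _ (HP k N)).
  assert (Hpick : forall k N, (N <= proj1_sig (pick k N))%nat /\ P k (proj1_sig (pick k N)))
    by (intros k N; exact (proj2_sig (pick k N))).
  exists (fix g k := match k with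
                    | O => proj1_sig (pick O O)
                    | S k' => proj1_sig (pick (S k') (S (g k')))
                    end).
  split; intros [|k]; apply Hpick.
Qed.

Lemma subseq_indicator (g : nat -> nat) c : 0 <= c ->
  exists h : nat -> R, (forall n, 0 <= h n) /\ (forall k, h (g k) = c) /\
    (forall n, (forall k, g k <> n) -> h n = 0).
Proof.
  intros Hc. exists (fun n => if excluded_middle_informative (exists k, g k = n) then c else 0).
  split; [|split].
  - intros n. destruct excluded_middle_informative; lra.
  - intros k. destruct excluded_middle_informative as [_|Hoff]; [reflexivity|].
    exfalso; apply Hoff; exists k; reflexivity.
  - intros n Hoff. destruct excluded_middle_informative as [[k Hk]|_]; [|reflexivity].
    exfalso; exact (Hoff k Hk).
Qed.

Lemma increasing_le_reflect (g : nat -> nat) i j :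
  (forall k, (g k < g (S k))%nat) -> (g i <= g j)%nat -> (i <= j)%nat.
Proof.
  intros Hg Hij. destruct (Nat.le_gt_cases i j) as [Hle|Hgt]; [exact Hle|].
  exfalso. assert (Hlt : forall m, (j < m)%nat -> (g j < g m)%nat).
  { induction 1 as [|m _ IH]; [apply Hg|]. specialize (Hg m). lia. }
  specialize (Hlt i Hgt). lia.
Qed.

Lemma sum_add_later_term (h : nat -> R) m1 m2 : (forall n, 0 <= h n) -> (m1 < m2)%nat ->
  sum_f_R0 h m1 + h m2 <= sum_f_R0 h m2.
Proof.
  intros Hh Hm. induction Hm as [|m _ IH]; simpl; [lra|]. pose proof (Hh m). lra.
Qed.

Lemma series_diverges_on_subseq (h : nat -> R) (g : nat -> nat) c : 0 < c ->
  (forall n, 0 <= h n) -> (forall k, (g k < g (S k))%nat) -> (forall k, h (g k) = c) ->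
  series_diverges h.
Proof.
  intros Hc Hh Hg Hhg.
  assert (Hsum : forall K, INR (S K) * c <= sum_f_R0 h (g K)).
  { induction K as [|K IH].
    - rewrite <- (Hhg 0%nat). simpl. destruct (g 0%nat) as [|n] eqn:Hg0; simpl; [lra|].
      pose proof (sum_add_later_term h 0 (S n) Hh ltac:(lia)). pose proof (Hh 0%nat).
      simpl in *. lra.
    - pose proof (sum_add_later_term h (g K) (g (S K)) Hh (Hg K)).
      rewrite Hhg in *. rewrite S_INR. lra. }
  intros M. destruct (INR_unbounded (M / c)) as [K HK]. exists (g K).
  apply Rlt_le_trans with (2 := Hsum K). rewrite S_INR.
  apply (Rmult_lt_compat_r c) in HK; [|exact Hc].
  unfold Rdiv in HK. rewrite Rmult_assoc, Rinv_l in HK by lra. lra.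
Qed.

Lemma geometric_tail_small A eps : 0 < A -> 0 < eps ->
  exists K, forall N, sum_f_R0 (fun k => A * (/ 2) ^ (K + k)) N <= eps.
Proof.
  intros HA Heps.
  destruct (pow_lt_1_zero (/ 2) ltac:(rewrite Rabs_right; lra) (eps / (2 * A)))
    as [K HK]; [apply Rdiv_lt_0_compat; lra|].
  specialize (HK K (le_n K)). rewrite Rabs_right in HK by (apply Rle_ge, pow_le; lra).
  exists K. intros N.
  assert (Hgeom : sum_f_R0 (fun k => (/ 2) ^ k) N <= 2).
  { assert (Hclosed : sum_f_R0 (fun k => (/ 2) ^ k) N = 2 - (/ 2) ^ N).
    { induction N as [|N IH]; simpl; [lra|]. rewrite IH. field. }
    pose proof (pow_le (/ 2) N ltac:(lra)). lra. }
  rewrite (sum_eq _ (fun k => (/ 2) ^ k * (A * (/ 2) ^ K)))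
    by (intros i _; rewrite pow_add; ring).
  rewrite <- scal_sum.
  assert (HAK : A * (/ 2) ^ K <= eps / 2).
  { apply (Rmult_lt_compat_l (2 * A)) in HK; [|lra].
    replace (2 * A * (eps / (2 * A))) with eps in HK by (field; lra). lra. }
  apply Rle_trans with (A * (/ 2) ^ K * 2); [|lra].
  apply Rmult_le_compat_l; [|exact Hgeom].
  apply Rmult_le_pos; [lra|apply pow_le; lra].
Qed.

(* Off the subsequence the radius is 0, so those balls are points: the net
   cubes at level [n] with radius 0 have volume 0 and cover them. *)
Lemma limsup_balls_null d (Y : nat -> list pt) (r : nat -> R) (g : nat -> nat) A :
  (0 < d)%nat -> 0 < A -> (forall k, (g k < g (S k))%nat) ->
  (forall n, 0 <= r n) -> (forall n, (forall k, g k <> n) -> r n = 0) ->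
  (forall k, INR (Tsep d (Y (g k)) (r (g k))) * (4 * r (g k)) ^ d <= A * (/ 2) ^ k) ->
  lebesgue_null d (fun x =>
    forall N, exists n, (N <= n)%nat /\ exists y, In y (Y n) /\ Defs.dist d x y <= r n).
Proof.
  intros Hd HA Hg Hr Hr0 HT. apply lebesgue_null_of_box_lists; [exact Hd|].
  intros eps Heps. destruct (geometric_tail_small A eps HA Heps) as [K HK].
  exists (fun k => net_cubes d (r (g (K + k)%nat)) (Y (g (K + k)%nat)) ++ net_cubes d 0 (Y k)).
  split; [|split].
  - intros j b Hb. apply in_app_or in Hb.
    destruct Hb as [Hb|Hb];
      [exact (net_cubes_wf d _ _ (Hr _) b Hb)|exact (net_cubes_wf d 0 _ (Rle_refl 0) b Hb)].
  - intros N. apply Rle_trans with (2 := HK N). apply sum_Rle. intros k _.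
    rewrite vol_list_app.
    pose proof (vol_list_net_cubes d 0 (Y k) ltac:(lra)) as Hpts.
    rewrite Rmult_0_r, pow_i, Rmult_0_r in Hpts by exact Hd.
    pose proof (vol_list_net_cubes d _ (Y (g (K + k)%nat)) (Hr (g (K + k)%nat))).
    specialize (HT (K + k)%nat). lra.
  - intros x Hx. destruct (Hx (g K)) as [n [Hn [y [Hy Hxy]]]].
    destruct (classic (exists k, g k = n)) as [[k <-]|Hoff].
    + pose proof (increasing_le_reflect g K k Hg Hn) as HKk.
      destruct (net_cubes_cover d _ _ y x (Hr (g k)) Hy Hxy) as [b [Hb Hxb]].
      exists (k - K)%nat, b. replace (K + (k - K))%nat with k by lia.
      split; [apply in_or_app; left; exact Hb|exact Hxb].
    + rewrite Hr0 in Hxy by (intros k Hk; apply Hoff; exists k; exact Hk).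
      destruct (net_cubes_cover d 0 _ y x ltac:(lra) Hy Hxy) as [b [Hb Hxb]].
      exists n, b. split; [apply in_or_app; right; exact Hb|exact Hxb].
Qed.

Lemma Rpower_scaled_pow d c R : (0 < d)%nat -> 0 < R ->
  (c * Rpower R (- (1 / INR d))) ^ d = c ^ d / R.
Proof.
  intros Hd HR. rewrite Rpow_mult_distr. unfold Rdiv. f_equal.
  rewrite <- Rpower_pow by apply exp_pos. rewrite Rpower_mult.
  replace (- (1 * / INR d) * INR d) with (- (1)) by (field; apply not_0_INR; lia).
  rewrite Rpower_Ropp, Rpower_1 by exact HR. reflexivity.
Qed.

Lemma droot_pow d a : (0 < d)%nat -> 0 < a -> droot d (a ^ d) = a.
Proof.
  intros Hd Ha. unfold droot. destruct Rle_dec as [Hle|_].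
  - pose proof (pow_lt a d Ha). lra.
  - rewrite <- Rpower_pow, Rpower_mult by exact Ha.
    replace (INR d * (1 / INR d)) with 1 by (field; apply not_0_INR; lia).
    apply Rpower_1, Ha.
Qed.

Lemma droot_nonneg d x : 0 <= droot d x.
Proof. unfold droot. destruct Rle_dec; [lra|]. left; apply exp_pos. Qed.

Lemma droot_0 d : droot d 0 = 0.
Proof. unfold droot. destruct Rle_dec; lra. Qed.

Lemma count_times_cube_volume_at_scale d (T : nat) s R : (0 < d)%nat -> 0 < R ->
  INR T * (4 * (s * Rpower R (- (1 / INR d)))) ^ d = (4 * s) ^ d * (INR T / R).
Proof.
  intros Hd HR. rewrite <- Rmult_assoc, Rpower_scaled_pow by assumption.
  unfold Rdiv; ring.
Qed.

Theorem mainTheorem14 (d : nat) (Omega : Type) (Rn : nat -> nat)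
  (f : nat -> nat -> Omega -> pt) (w : Omega) (s : R) :
  (0 < d)%nat ->
  (forall n, (0 < Rn n)%nat) ->
  0 < s ->
  liminf_zero (fun n =>
    INR (Tsep d (Yn f Rn n w) (s * Rpower (INR (Rn n)) (- (1 / INR d))))
    / INR (Rn n)) ->
  exists h : nat -> R,
    (forall n, 0 <= h n) /\
    series_diverges h /\
    lebesgue_null d (fun x =>
      forall N, exists n, (N <= n)%nat /\
        exists l, (1 <= l <= Rn n)%nat /\
          ball d (f l n w) (droot d (h n / INR (Rn n))) x).
Proof.
  intros Hd HRn Hs Hlim.
  set (rho := fun n => s * Rpower (INR (Rn n)) (- (1 / INR d))).
  assert (HR : forall n, 0 < INR (Rn n)) by (intros n; apply lt_0_INR, HRn).
  destruct (increasing_choice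
              (fun k n => INR (Tsep d (Yn f Rn n w) (rho n)) / INR (Rn n) < (/ 2) ^ k))
    as [g [Hsmall Hg]].
  { intros k N. apply Hlim, pow_lt. lra. }
  destruct (subseq_indicator g (s ^ d) (pow_le s d ltac:(lra))) as [h [Hh [Hh_on Hh_off]]].
  set (r := fun n => droot d (h n / INR (Rn n))).
  assert (Hr_on : forall k, r (g k) = rho (g k)).
  { intros k. unfold r. rewrite Hh_on, <- Rpower_scaled_pow by auto.
    apply droot_pow; [exact Hd|]. apply Rmult_lt_0_compat; [exact Hs|apply exp_pos]. }
  exists h. split; [exact Hh|split].
  - exact (series_diverges_on_subseq h g (s ^ d) (pow_lt s d Hs) Hh Hg Hh_on).
  - apply lebesgue_null_subset with (fun x => forall N, exists n, (N <= n)%nat /\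
      exists y, In y (Yn f Rn n w) /\ Defs.dist d x y <= r n).
    { intros x Hx N. destruct (Hx N) as [n [HNn [l [Hl Hball]]]].
      exists n. split; [exact HNn|]. exists (f l n w). split; [|exact Hball].
      apply (in_map (fun l => f l n w)), in_seq. lia. }
    apply (limsup_balls_null d _ r g ((4 * s) ^ d) Hd (pow_lt (4 * s) d ltac:(lra)) Hg).
    + intros n. apply droot_nonneg.
    + intros n Hoff. unfold r. rewrite Hh_off, Rdiv_0_l by exact Hoff. apply droot_0.
    + intros k. rewrite Hr_on. unfold rho. rewrite count_times_cube_volume_at_scale by auto.
      apply Rmult_le_compat_l; [apply pow_le; lra|left; exact (Hsmall k)].
Qed.
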